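(* For every integer $m\ge1$, the following identity holds in the field $\mathbb Q(q)(w,z_1,\dots,z_m)$ of rational functions (with $q$ an indeterminate): $$\sum_{\sigma\in S_m}\sum_{r=0}^{m}\begin{bmatrix} m\\ r\end{bmatrix}\prod_{k=1}^{r}\big(w-q^{m-1}z_{\sigma(k)}\big)\prod_{k=r+1}^{m}\big(z_{\sigma(k)}-q^{m-1}w\big)\prod_{1\le i<j\le m}\frac{z_{\sigma(i)}-q^{2}z_{\sigma(j)}}{z_{\sigma(i)}-z_{\sigma(j)}}=0.$$
   Context: $[k]=\frac{q^k-q^{-k}}{q-q^{-1}}$, $[k]!=[1][2]\cdots[k]$ with $[0]!=1$, and $\begin{bmatrix} m\\ r\end{bmatrix}=\frac{[m]!}{[r]![m-r]!}$ (a Laurent polynomial in $q$). $S_m$ is the symmetric group on $\{1,\dots,m\}$, acting by permuting the indices of $z_1,\dots,z_m$. *)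

From HB Require Import structures.
From mathcomp Require Import all_boot all_order all_algebra all_fingroup.
From mathcomp Require Import fraction.
From mathcomp Require Import mpoly.
Set Implicit Arguments. Unset Strict Implicit. Unset Printing Implicit Defensive.
Import Order.TTheory GRing.Theory.
Local Open Scope ring_scope.

Definition qint (F : fieldType) (q : F) (k : nat) : F :=
  (q ^+ k - q^-1 ^+ k) / (q - q^-1).
Definition qfact (F : fieldType) (q : F) (k : nat) : F :=
  \prod_(1 <= i < k.+1) qint q i.
Definition qbinom (F : fieldType) (q : F) (m r : nat) : F :=
  qfact q m / (qfact q r * qfact q (m - r)).

(* The field Q(q)(w, z_1, ..., z_m) realised as the fraction field of
   Q[X_0, X_1, ..., X_(m+1)], with q = X_0, w = X_1, z_(i+1) = X_(i+2). *)
Definition RatFun (m : nat) : fieldType := {fraction {mpoly rat[m.+2]}}.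

Definition varq (m : nat) : RatFun m := (FracField.tofrac 'X_(@ord0 m.+1)).
Definition varw (m : nat) : RatFun m := (FracField.tofrac 'X_(@inord m.+1 1)).
Definition varz (m : nat) (i : 'I_m) : RatFun m := (FracField.tofrac 'X_(@inord m.+1 i.+2)).

From HB Require Import structures.
From mathcomp Require Import all_boot all_order all_algebra all_fingroup.
From mathcomp Require Import fraction.
From mathcomp Require Import mpoly.
From mathcomp Require Import zify ring.
From Stdlib Require Import FunctionalExtensionality.
Import GRing.Theory.
Local Open Scope ring_scope.
Set Implicit Arguments. Unset Strict Implicit. Unset Printing Implicit Defensive.

(* With t = q^2, let D(y) = \prod_(i < j) (y_i - t y_j) / (y_i - y_j) and let
   L be the t-symmetrizer g |-> \sum_s g(z o s) D(z o s).  Swapping two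
   adjacent variables turns D(y) (y_i - t y_(i+1)) into
   -(y_(i+1) - t y_i) D(y), so L kills (y_(i+1) - t y_i) h(y) whenever h is
   invariant under that swap.  Hence L maps a squarefree monomial to a power
   of t times a value K_j depending only on the number j of absent variables,
   and L of a product of linear forms \prod_k (a_k + b_k y_k) is the image of
   the polynomial \prod_k (a_k t^(m-1-k) X + b_k) under the linear map
   X^j |-> K_j.  For the summands of the theorem these polynomials, weighted
   by the q-binomials, sum to \sum_r [m, r]_t \prod_(j<r) (u - t^j)
   \prod_(j<m-r) (1 - t^j u) with u = q^(m-1) w X, which the q-binomial
   theorem evaluates to \prod_(j<m) (1 - t^j) = 0. *)

Section Symmetrizer.
Variables (F : fieldType) (t : F) (m : nat).

Definition tratio (a b : F) : F := (a - t * b) / (a - b).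

Definition tdelta (y : 'I_m -> F) : F :=
  \prod_(i < m) \prod_(j < m | (i < j)%N) tratio (y i) (y j).

Lemma tdelta_pairs (y : 'I_m -> F) :
  tdelta y = \prod_(p : 'I_m * 'I_m | (p.1 < p.2)%N) tratio (y p.1) (y p.2).
Proof. by rewrite /tdelta pair_big_dep. Qed.

Lemma ltn_tperm_adj (i j a c : 'I_m) : j = i.+1 :> nat ->
  ((tperm i j a < tperm i j c)%N && ((a, c) != (j, i))) =
  ((a < c)%N && ((a, c) != (i, j))).
Proof.
move=> hij.
have nij : i != j by apply/eqP => e; move: hij; rewrite e; lia.
have tpermE (x : 'I_m) : (tperm i j x : nat) =
    if x == i then nat_of_ord j else if x == j then nat_of_ord i else nat_of_ord x.
  case: (tpermP i j x) => [->|->|/eqP xi /eqP xj].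
  - by rewrite eqxx.
  - by rewrite eq_sym (negbTE nij) eqxx.
  - by rewrite (negbTE xi) (negbTE xj).
rewrite !xpair_eqE !tpermE -!(inj_eq val_inj) /=.
have := ltn_ord a; have := ltn_ord c.
move: (nat_of_ord a) (nat_of_ord c) (nat_of_ord i) (nat_of_ord j) hij => A C I J ->.
do 4 case: eqP; move=> *; lia.
Qed.

Lemma tdelta_tperm_adj (i j : 'I_m) (y : 'I_m -> F) : j = i.+1 :> nat ->
  tdelta (fun k => y (tperm i j k)) * (y i - t * y j) = - ((y j - t * y i) * tdelta y).
Proof.
move=> hij.
have lij : (i < j)%N by rewrite hij.
rewrite !tdelta_pairs.
have tperm2K : involutive (fun p : 'I_m * 'I_m => (tperm i j p.1, tperm i j p.2)).
  by move=> [a b] /=; rewrite !tpermK.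
rewrite (reindex_inj (inv_inj tperm2K)) /=.
under eq_bigr do rewrite !tpermK.
rewrite (bigD1 (j, i)) /=; last by rewrite tpermR tpermL.
rewrite [in RHS](bigD1 (i, j)) //=.
rewrite (eq_bigl (fun p : 'I_m * 'I_m => (p.1 < p.2)%N && (p != (i, j)))); last first.
  by move=> [a c]; rewrite /= ltn_tperm_adj.
rewrite /tratio -[(y j - y i)^-1]opprK -invrN opprB.
set R := \prod_(p | _) _; ring.
Qed.

Variable z : 'I_m -> F.

Definition symz (g : ('I_m -> F) -> F) : F :=
  \sum_(s : 'S_m) g (fun k => z (s k)) * tdelta (fun k => z (s k)).

Lemma eq_symz (g1 g2 : ('I_m -> F) -> F) : g1 =1 g2 -> symz g1 = symz g2.
Proof. by move=> e; apply: eq_bigr => s _; rewrite e. Qed.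

Lemma symz_tperm_adj_kernel (i j : 'I_m) (h : ('I_m -> F) -> F) :
  j = i.+1 :> nat -> 2%:R != 0 :> F ->
  (forall y, h (fun k => y (tperm i j k)) = h y) ->
  symz (fun y => (y j - t * y i) * h y) = 0.
Proof.
move=> hij h2 hsym.
pose G (y : 'I_m -> F) := (y j - t * y i) * h y * tdelta y.
have G_tperm y : G (fun k => y (tperm i j k)) = - G y.
  rewrite /G hsym tpermL tpermR mulrAC [(y i - t * y j) * _]mulrC tdelta_tperm_adj //.
  ring.
have S_opp : symz (fun y => (y j - t * y i) * h y) = - symz (fun y => (y j - t * y i) * h y).
  rewrite {1}/symz (reindex_inj (mulgI (tperm i j))) /= /symz -sumrN.
  apply: eq_bigr => s _.
  transitivity (G (fun k => z ((tperm i j * s)%g k))); first by [].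
  have -> : (fun k => z ((tperm i j * s)%g k)) = (fun k => (fun k => z (s k)) (tperm i j k)).
    by apply: functional_extensionality => k; rewrite permM.
  exact: (G_tperm (fun k => z (s k))).
apply/eqP; rewrite -(mulrI_eq0 _ (lregP h2)) mulr_natl mulr2n {2}S_opp.
by rewrite subrr.
Qed.

Definition bmono (b : {ffun 'I_m -> bool}) (y : 'I_m -> F) : F :=
  \prod_(k < m) (if b k then y k else 1).

Definition nfalse (b : {ffun 'I_m -> bool}) : nat := (\sum_(k < m | ~~ b k) 1)%N.

Definition false_weight (b : {ffun 'I_m -> bool}) : nat :=
  (\sum_(k < m | ~~ b k) (m.-1 - k))%N.

Definition prefix_mask (j : nat) : {ffun 'I_m -> bool} := [ffun k : 'I_m => (k < m - j)%N].

Definition symz_prefix (j : nat) : F :=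
  symz (bmono (prefix_mask j)) / t ^+ false_weight (prefix_mask j).

Lemma symz_bmono_tperm_adj (b : {ffun 'I_m -> bool}) (i j : 'I_m) :
  j = i.+1 :> nat -> 2%:R != 0 :> F -> ~~ b i -> b j ->
  symz (bmono b) = t * symz (bmono [ffun k => b (tperm i j k)]).
Proof.
move=> hij h2 bi bj.
have nij : i != j by apply/eqP => e; move: hij; rewrite e; lia.
pose P (y : 'I_m -> F) := \prod_(k < m | (k != i) && (k != j)) (if b k then y k else 1).
have bmonoE y : bmono b y = y j * P y.
  rewrite /bmono (bigD1 j) //= bj (bigD1 i) //= (negbTE bi) mul1r.
  by congr (_ * _); apply: eq_bigl => k; rewrite andbC.
have bmono_tpermE y : bmono [ffun k => b (tperm i j k)] y = y i * P y.
  rewrite /bmono (bigD1 i) //= ffunE tpermL bj (bigD1 j) 1?eq_sym //=.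
  rewrite ffunE tpermR (negbTE bi) mul1r; congr (_ * _); apply: eq_big => k.
    by rewrite andbC.
  by move=> /andP [ki kj]; rewrite ffunE tpermD // eq_sym.
have P_tperm y : P (fun k => y (tperm i j k)) = P y.
  by apply: eq_bigr => k /andP [ki kj]; rewrite tpermD // eq_sym.
have := symz_tperm_adj_kernel hij h2 P_tperm.
rewrite (eq_symz bmonoE) (eq_symz bmono_tpermE) /symz.
under eq_bigr do rewrite mulrBl mulrBl.
rewrite sumrB mulr_sumr => /eqP; rewrite subr_eq0 => /eqP ->.
by apply: eq_bigr => s _; rewrite !mulrA.
Qed.

Lemma sum_false_tperm (b : {ffun 'I_m -> bool}) (i j : 'I_m) (e : 'I_m -> nat) :
  (\sum_(k < m | ~~ [ffun k => b (tperm i j k)] k) e k =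
   \sum_(k < m | ~~ b k) e (tperm i j k))%N.
Proof.
rewrite (reindex_inj (@perm_inj _ (tperm i j))) /=.
by apply: eq_bigl => k; rewrite ffunE tpermK.
Qed.

Lemma nfalse_tperm (b : {ffun 'I_m -> bool}) (i j : 'I_m) :
  nfalse [ffun k => b (tperm i j k)] = nfalse b.
Proof. by rewrite /nfalse sum_false_tperm. Qed.

Lemma false_weight_tperm_adj (b : {ffun 'I_m -> bool}) (i j : 'I_m) :
  j = i.+1 :> nat -> ~~ b i -> b j ->
  false_weight b = (false_weight [ffun k => b (tperm i j k)]).+1.
Proof.
move=> hij bi bj.
rewrite /false_weight sum_false_tperm (bigD1 i) //= [in RHS](bigD1 i) //= tpermL.
have -> : (\sum_(k < m | ~~ b k && (k != i)) (m.-1 - tperm i j k) =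
           \sum_(k < m | ~~ b k && (k != i)) (m.-1 - k))%N.
  apply: eq_bigr => k /andP [bk ki]; rewrite tpermD // ?(eq_sym i) //.
  by apply/eqP => ejk; move: bk; rewrite -ejk bj.
have := ltn_ord j; rewrite hij; move: (\sum_(_ < _ | _) _)%N => S; lia.
Qed.

Lemma nfalse_le (b : {ffun 'I_m -> bool}) : (nfalse b <= m)%N.
Proof. by rewrite /nfalse sum1_card -[X in (_ <= X)%N]card_ord max_card. Qed.

Lemma prefix_mask_nfalse (b : {ffun 'I_m -> bool}) :
  (forall i j : 'I_m, j = i.+1 :> nat -> b j -> b i) -> b = prefix_mask (nfalse b).
Proof.
move=> bS.
pose bn n := oapp b false (insub n : option 'I_m).
have bnE (k : 'I_m) : bn k = b k by rewrite /bn valK.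
have bnS n : bn n.+1 -> bn n.
  rewrite /bn; case: insubP => //= k kin ek bk.
  have nm : (n < m)%N by apply: ltnW.
  by rewrite (insubT (fun x => x < m)%N nm) /=; apply: (bS _ k); rewrite //= ek.
have exP : exists n, ~~ bn n by exists m; rewrite /bn insubN // ltnn.
have [p pP pmin] := find_ex_minn exP.
have pm : (p <= m)%N by apply: pmin; rewrite /bn insubN // ltnn.
have bE (k : 'I_m) : b k = (k < p)%N.
  rewrite -bnE; case: ltnP => kp.
    by apply/negbNE/negP => /pmin; rewrite leqNgt kp.
  apply/negbTE/negP => bnk; move/negP: pP; apply.
  move: bnk; rewrite -(subnKC kp); elim: (k - p)%N => [|d IH]; first by rewrite addn0.
  by rewrite addnS => /bnS.
have -> : nfalse b = (m - p)%N.
  rewrite /nfalse (eq_bigl (fun k : 'I_m => true && (p <= k)%N)); last first.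
    by move=> k; rewrite bE -leqNgt.
  by rewrite -(big_geq_mkord p m (fun _ => true) (fun _ => 1%N)) sum_nat_const_nat muln1.
by apply/ffunP => k; rewrite ffunE bE subKn.
Qed.

Lemma symz_bmono (b : {ffun 'I_m -> bool}) : t != 0 -> 2%:R != 0 :> F ->
  symz (bmono b) = t ^+ false_weight b * symz_prefix (nfalse b).
Proof.
move=> t0 h2.
have [n] := ubnP (false_weight b); elim: n b => // n IH b hb.
case: (boolP [exists i : 'I_m, exists j : 'I_m, (j == i.+1 :> nat) && ~~ b i && b j]).
  move=> /existsP [i /existsP [j /andP [/andP [/eqP hij bi] bj]]].
  rewrite (symz_bmono_tperm_adj hij h2 bi bj) IH; last first.
    by move: hb; rewrite (false_weight_tperm_adj hij bi bj) ltnS.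
  by rewrite nfalse_tperm (false_weight_tperm_adj hij bi bj) exprS mulrA.
move=> no_ascent; have b_prefix : b = prefix_mask (nfalse b).
  apply: prefix_mask_nfalse => i j hij bj; apply/negPn/negP => bi.
  by move/negP: no_ascent; apply; apply/existsP; exists i; apply/existsP; exists j;
    rewrite hij eqxx bi bj.
by rewrite /symz_prefix -b_prefix mulrC divfK // expf_neq0.
Qed.

Definition symz_coef (p : {poly F}) : F := \sum_(j < m.+1) p`_j * symz_prefix j.

Lemma symz_coef_sum (I : finType) (c : I -> F) (p : I -> {poly F}) :
  \sum_(i : I) c i * symz_coef (p i) = symz_coef (\sum_(i : I) c i *: p i).
Proof.
rewrite /symz_coef; under [RHS]eq_bigr do rewrite coef_sum mulr_suml.
rewrite [RHS]exchange_big /=; apply: eq_bigr => i _; rewrite mulr_sumr.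
by apply: eq_bigr => j _; rewrite coefZ mulrA.
Qed.

Lemma symz_coefXn n : (n <= m)%N -> symz_coef 'X^n = symz_prefix n.
Proof.
move=> nm; rewrite /symz_coef (bigD1 (inord n)) //= coefXn inordK ?ltnS // eqxx mul1r.
rewrite big1 ?addr0 // => j jn; rewrite coefXn.
have -> : (j == n :> nat) = false by apply: contraNF jn => /eqP <-; rewrite inord_val.
by rewrite mul0r.
Qed.

Lemma prod_linear_bmono (a b : 'I_m -> F) (y : 'I_m -> F) :
  \prod_(k < m) (a k + b k * y k) =
  \sum_(c : {ffun 'I_m -> bool}) (\prod_(k < m) (if c k then b k else a k)) * bmono c y.
Proof.
have e k : a k + b k * y k = \sum_(c : bool) (if c then b k * y k else a k).
  by rewrite big_bool /= addrC.
under eq_bigr do rewrite e.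
rewrite bigA_distr_bigA /=; apply: eq_bigr => c _.
rewrite /bmono -big_split /=; apply: eq_bigr => k _.
by case: (c k); rewrite ?mulr1.
Qed.

Lemma prod_linear_polyXn (a b : 'I_m -> F) :
  \prod_(k < m) (a k *: 'X + (b k)%:P) =
  \sum_(c : {ffun 'I_m -> bool})
     (\prod_(k < m) (if c k then b k else a k)) *: 'X^(nfalse c).
Proof.
have e k : a k *: 'X + (b k)%:P = \sum_(c : bool) (if c then (b k)%:P else a k *: 'X).
  by rewrite big_bool /= addrC.
under eq_bigr do rewrite e.
rewrite bigA_distr_bigA /=; apply: eq_bigr => c _.
have e2 k : (if c k then (b k)%:P else a k *: 'X) =
    (if c k then b k else a k)%:P * (if c k then 1 else 'X).
  by case: (c k); rewrite ?mulr1 // mul_polyC.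
under eq_bigr do rewrite e2.
rewrite big_split /= -rmorph_prod -mul_polyC; congr (_ * _).
rewrite /nfalse -prodrXr [RHS]big_mkcond /=; apply: eq_bigr => k _.
by case: (c k); rewrite /= ?expr1.
Qed.

Lemma symz_prod_linear (a b : 'I_m -> F) : t != 0 -> 2%:R != 0 :> F ->
  symz (fun y => \prod_(k < m) (a k + b k * y k)) =
  symz_coef (\prod_(k < m) ((a k * t ^+ (m.-1 - k)) *: 'X + (b k)%:P)).
Proof.
move=> t0 h2.
rewrite (eq_symz (prod_linear_bmono a b)) prod_linear_polyXn -symz_coef_sum.
under [RHS]eq_bigr do rewrite symz_coefXn ?nfalse_le //.
rewrite [LHS](_ : _ = \sum_(c : {ffun 'I_m -> bool})
    (\prod_(k < m) (if c k then b k else a k)) * symz (bmono c)); last first.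
  rewrite /symz; under eq_bigr do rewrite mulr_suml.
  rewrite exchange_big; apply: eq_bigr => c _; rewrite mulr_sumr.
  by apply: eq_bigr => s _; rewrite mulrA.
apply: eq_bigr => c _; rewrite symz_bmono // mulrA; congr (_ * _).
rewrite /false_weight -prodrXr [X in _ * X]big_mkcond -big_split /=.
by apply: eq_bigr => k _; case: (c k); rewrite /= ?mulr1.
Qed.

End Symmetrizer.

Fixpoint gbinom (R : pzRingType) (t : R) (n r : nat) : R :=
  match n, r with
  | 0, 0 => 1
  | 0, _.+1 => 0
  | _.+1, 0 => 1
  | n'.+1, r'.+1 => t ^+ (n' - r') * gbinom t n' r' + gbinom t n' r'.+1
  end.

Lemma gbinom_gt (R : pzRingType) (t : R) n r : (n < r)%N -> gbinom t n r = 0.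
Proof. by elim: n r => [|n IH] [|r] //= hr; rewrite !IH ?addr0 ?mulr0 // ltnW. Qed.

Lemma gbinom_n0 (R : pzRingType) (t : R) n : gbinom t n 0 = 1.
Proof. by case: n. Qed.

Lemma gbinom_polyC (F : fieldType) (t : F) n r : gbinom t%:P n r = (gbinom t n r)%:P.
Proof. by elim: n r => [|n IH] [|r] //=; rewrite rmorphD rmorphM rmorphXn !IH. Qed.

Lemma gbinom_sum_prod (R : comPzRingType) (t u : R) n :
  \sum_(0 <= r < n.+1)
     gbinom t n r * (\prod_(j < r) (u - t ^+ j)) * (\prod_(j < n - r) (1 - t ^+ j * u))
  = \prod_(j < n) (1 - t ^+ j).
Proof.
elim: n => [|n IH]; first by rewrite big_nat1 /= !big_ord0 !mulr1.
pose S k (n' : nat) :=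
  gbinom t n k * (\prod_(j < k) (u - t ^+ j)) * (\prod_(j < n' - k) (1 - t ^+ j * u)).
have split_term k : (k < n.+1)%N -> S k n * (1 - t ^+ n) =
    t ^+ (n - k) * gbinom t n k * (\prod_(j < k.+1) (u - t ^+ j))
      * (\prod_(j < n - k) (1 - t ^+ j * u)) + S k n.+1.
  move=> kn; have kn' : (k <= n)%N by rewrite -ltnS.
  rewrite /S (big_ord_recr k) (subSn kn') (big_ord_recr (n - k)) /=.
  rewrite -(subnK kn') exprD addnK.
  set A := \prod_(i < k) _; set B := \prod_(i < n - k) _; ring.
rewrite (big_ord_recr n) /= -IH mulr_suml big_nat_recl // big_ord0 mul1r subn0 mul1r.
rewrite (eq_big_nat _ _ (F1 := fun k => S k n * (1 - t ^+ n))
  (fun k hk => split_term k (proj2 (andP hk)))) big_split /=.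
rewrite [X in _ = _ + X]big_nat_recl // /S gbinom_n0 big_ord0 !mul1r subn0.
rewrite addrCA; congr (_ + _).
under eq_bigr do rewrite !mulrDl.
rewrite big_split /=; congr (_ + _).
rewrite big_nat_recr //= gbinom_gt // !mul0r addr0.
by apply: eq_big_nat => k _; rewrite subSS.
Qed.

Lemma prod_sqr_powers (R : comPzRingType) (q : R) n :
  \prod_(k < n) (q ^+ 2) ^+ k = q ^+ (n * n.-1).
Proof.
elim: n => [|n IH]; first by rewrite big_ord0 expr0.
rewrite big_ord_recr /= IH -exprM -exprD; congr (_ ^+ _); case: n {IH} => //= n; nia.
Qed.

Section QBinomial.
Variables (F : fieldType) (q : F).
Hypothesis q_neq0 : q != 0.
Hypothesis qintS_neq0 : forall k, qint q k.+1 != 0.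

Lemma qfact0 : qfact q 0 = 1.
Proof. by rewrite /qfact big_geq. Qed.

Lemma qfactS n : qfact q n.+1 = qfact q n * qint q n.+1.
Proof. by rewrite /qfact big_nat_recr. Qed.

Lemma qfact_neq0 n : qfact q n != 0.
Proof. by elim: n => [|n IH]; rewrite ?qfact0 ?oner_neq0 // qfactS mulf_neq0. Qed.

Lemma qbinom_n0 n : qbinom q n 0 = 1.
Proof. by rewrite /qbinom qfact0 mul1r subn0 divff // qfact_neq0. Qed.

Lemma qbinom_nn n : qbinom q n n = 1.
Proof. by rewrite /qbinom subnn qfact0 mulr1 divff // qfact_neq0. Qed.

Lemma qint_addS k d :
  q ^+ k.+1 * qint q (k + d).+2 = q ^+ (k + d).+2 * qint q k.+1 + qint q d.+1.
Proof.
rewrite /qint !mulrA -mulrDl; congr (_ / _).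
have qqV : q ^+ k.+1 * q^-1 ^+ k.+1 = 1 by rewrite -exprMn mulfV // expr1n.
rewrite -addSn -addnS !exprD; apply/eqP; rewrite -subr_eq0; apply/eqP.
set a := q ^+ k.+1; set b := q^-1 ^+ k.+1; set c := q ^+ d.+1; set e := q^-1 ^+ d.+1.
transitivity ((a * b - 1) * (c - e)); first ring.
by rewrite qqV subrr mul0r.
Qed.

Lemma qbinom_pascal n k : (k < n)%N ->
  q ^+ k.+1 * qbinom q n.+1 k.+1 = q ^+ n.+1 * qbinom q n k + qbinom q n k.+1.
Proof.
move=> kn.
have [d ->] : exists d, n = (k + d).+1 by exists (n - k.+1)%N; lia.
rewrite /qbinom.
have -> : ((k + d).+2 - k.+1)%N = d.+1 by lia.
have -> : ((k + d).+1 - k)%N = d.+1 by lia.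
have -> : ((k + d).+1 - k.+1)%N = d by lia.
rewrite !qfactS.
have := qint_addS k d.
set A := qint q (k + d).+2; set B := qint q k.+1; set C := qint q d.+1 => hA.
have {hA}-> : A = (q ^+ (k + d).+2 * B + C) / q ^+ k.+1.
  by rewrite -hA [_ * A]mulrC mulfK // expf_neq0.
field.
by rewrite !qfact_neq0 !qintS_neq0 expf_neq0.
Qed.

Lemma gbinom_qbinom n r :
  (r <= n)%N -> gbinom (q ^+ 2) n r = q ^+ (r * (n - r)) * qbinom q n r.
Proof.
elim: n r => [|n IH] [|r] //= hr.
- by rewrite /qbinom qfact0 !mul1r invr1.
- by rewrite qbinom_n0 mul1r.
have [rn | rn] := ltnP r n.
- rewrite !IH // ?ltnW //.
  have -> : q ^+ (r.+1 * (n - r)) = q ^+ (r.+1 * (n - r.+1)) * q ^+ r.+1.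
    by rewrite -exprD; congr (_ ^+ _); nia.
  rewrite -mulrA qbinom_pascal // mulrDr !mulrA -!exprM -!exprD.
  by congr (_ ^+ _ * _ / _ + _); nia.
- have -> : r = n by lia.
  by rewrite subnn (@gbinom_gt _ _ n n.+1) // addr0 IH // !subnn !muln0 !mul1r !qbinom_nn.
Qed.

End QBinomial.

Section FactorPolynomials.
Variables (F : fieldType) (q w : F) (m : nat).
Hypothesis q_neq0 : q != 0.
Hypothesis qintS_neq0 : forall k, qint q k.+1 != 0.

Let t := q ^+ 2.
Let Q := q ^+ m.-1.
Let T : {poly F} := t%:P.
Let u : {poly F} := (Q * w) *: 'X.

Definition lin_const (r k : nat) : F := if (k < r)%N then w else - (Q * w).
Definition lin_slope (r k : nat) : F := if (k < r)%N then - Q else 1.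

Definition factor_poly (r : nat) : {poly F} :=
  \prod_(k < m) ((lin_const r k * t ^+ (m.-1 - k)) *: 'X + (lin_slope r k)%:P).

Lemma prod_lin_split r (y : 'I_m -> F) :
  (\prod_(k < m | (k < r)%N) (w - Q * y k)) * (\prod_(k < m | (r <= k)%N) (y k - Q * w))
  = \prod_(k < m) (lin_const r k + lin_slope r k * y k).
Proof.
rewrite [RHS](bigID (fun k : 'I_m => (k < r)%N)) /=; congr (_ * _).
  by apply: eq_bigr => k kr; rewrite /lin_const /lin_slope kr; ring.
apply: eq_big => k; first by rewrite leqNgt.
by rewrite leqNgt => /negbTE kr; rewrite /lin_const /lin_slope kr; ring.
Qed.

Lemma factor_poly_low r : (r <= m)%N ->
  \prod_(k < m | (k < r)%N) ((lin_const r k * t ^+ (m.-1 - k)) *: 'X + (lin_slope r k)%:P)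
    * (q ^+ (r * r.-1))%:P
  = (Q ^+ r)%:P * \prod_(j < r) (u - T ^+ j).
Proof.
move=> rm.
rewrite (eq_bigl (fun k : 'I_m => xpredT k && (k < r)%N)) //.
rewrite -(@big_ord_widen_cond _ 1 *%R r m xpredT (fun k => (lin_const r k * t ^+ (m.-1 - k)) *: 'X
  + (lin_slope r k)%:P) rm).
rewrite -prod_sqr_powers rmorph_prod -big_split /=.
have -> : (Q ^+ r)%:P = \prod_(k < r) Q%:P by rewrite prodr_const card_ord rmorphXn.
rewrite -big_split /=.
apply: eq_bigr => k _.
have kr : (k < r)%N := ltn_ord k.
have tQ : (t ^+ (m.-1 - k))%:P * (t ^+ k)%:P = Q%:P * Q%:P :> {poly F}.
  rewrite -!rmorphM -exprD subnK; last by lia.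
  by rewrite /t /Q -exprM -exprD; congr (_ ^+ _)%:P; lia.
rewrite /lin_const /lin_slope kr /u /T -!mul_polyC -rmorphXn -/t !rmorphM !rmorphN.
move: tQ; set a := (t ^+ (m.-1 - k))%:P; set b := (t ^+ k)%:P => tQ.
transitivity (w%:P * 'X * (a * b) - Q%:P * b); first ring.
by rewrite tQ; ring.
Qed.

Lemma factor_poly_high r : (r <= m)%N ->
  \prod_(k < m | ~~ (k < r)%N) ((lin_const r k * t ^+ (m.-1 - k)) *: 'X + (lin_slope r k)%:P)
  = \prod_(j < m - r) (1 - T ^+ j * u).
Proof.
move=> rm.
rewrite (eq_bigl (fun k : 'I_m => xpredT k && (r <= k)%N)); last by move=> k /=; rewrite -leqNgt.
rewrite -(big_geq_mkord r m xpredT (fun k => (lin_const r k * t ^+ (m.-1 - k)) *: 'X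
  + (lin_slope r k)%:P)).
rewrite big_nat_rev -{1}(add0n r) big_addn -(big_mkord xpredT (fun j => 1 - T ^+ j * u)).
apply: eq_big_nat => j /andP [_ jr].
have e1 : ((r + m - (j + r).+1) < r)%N = false by apply/negbTE; rewrite -leqNgt; lia.
have e2 : (m.-1 - (r + m - (j + r).+1))%N = j by lia.
by rewrite /lin_const /lin_slope e1 e2 /u /T -!mul_polyC -rmorphXn !rmorphM !rmorphN; ring.
Qed.

Lemma qbinom_factor_poly r : (r <= m)%N ->
  qbinom q m r *: factor_poly r =
  gbinom T m r * (\prod_(j < r) (u - T ^+ j)) * (\prod_(j < m - r) (1 - T ^+ j * u)).
Proof.
move=> rm.
have QrE : Q ^+ r = q ^+ (r * r.-1) * q ^+ (r * (m - r)).
  rewrite /Q -exprM -exprD; congr (_ ^+ _).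
  by case: r rm => [|r] rm; [rewrite !muln0 | rewrite /=; nia].
have c0 : (q ^+ (r * r.-1))%:P != 0 :> {poly F} by rewrite polyC_eq0 expf_neq0.
apply: (mulfI c0).
rewrite /factor_poly (bigID (fun k : 'I_m => (k < r)%N)) /= factor_poly_high // -mul_polyC.
set P1 := \prod_(i < m | _) _; set P2 := \prod_(j < m - r) _.
transitivity ((qbinom q m r)%:P * (P1 * (q ^+ (r * r.-1))%:P) * P2); first ring.
rewrite /P1 factor_poly_low // /T gbinom_polyC gbinom_qbinom //.
by rewrite QrE !rmorphM; ring.
Qed.

Lemma sum_qbinom_factor_poly : (1 <= m)%N -> \sum_(r < m.+1) qbinom q m r *: factor_poly r = 0.
Proof.
move=> m_gt0.
rewrite (eq_bigr (fun r : 'I_m.+1 => gbinom T m r * (\prod_(j < r) (u - T ^+ j))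
  * (\prod_(j < m - r) (1 - T ^+ j * u)))); last first.
  by move=> r _; apply: qbinom_factor_poly; rewrite -ltnS.
rewrite -(big_mkord xpredT (fun r => gbinom T m r * (\prod_(j < r) (u - T ^+ j))
  * (\prod_(j < m - r) (1 - T ^+ j * u)))).
by rewrite gbinom_sum_prod -(prednK m_gt0) big_ord_recl expr0 subrr mul0r.
Qed.

End FactorPolynomials.

Lemma qint_neq0 (F : fieldType) (q : F) : q != 0 ->
  (forall n, (0 < n)%N -> q ^+ n != 1) -> forall k, qint q k.+1 != 0.
Proof.
move=> q0 qn1 k.
have num n : (0 < n)%N -> q ^+ n - q^-1 ^+ n != 0.
  move=> n_gt0; rewrite subr_eq0.
  have := qn1 (n + n)%N; rewrite addn_gt0 n_gt0 => /(_ isT).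
  apply: contra => /eqP qnV; apply/eqP.
  by rewrite exprD {1}qnV -exprMn mulVf // expr1n.
rewrite /qint mulf_neq0 ?invr_neq0 ?num //.
by have := num 1%N isT; rewrite !expr1.
Qed.

(* Specializing all variables to 2 shows q is nonzero, of infinite order,
   and that the characteristic is not 2. *)
Lemma varq_facts m :
  [/\ varq m != 0, 2%:R != 0 :> RatFun m & forall n, (0 < n)%N -> varq m ^+ n != 1].
Proof.
pose v := fun _ : 'I_m.+2 => (2%:R : rat).
split.
- rewrite /varq tofrac_eq0; apply/eqP => /(congr1 (meval v)).
  by rewrite mevalXU meval0 => /eqP; rewrite Num.Theory.pnatr_eq0.
- rewrite -(rmorph_nat (@tofrac _)) tofrac_eq0; apply/eqP => /(congr1 (meval v)).
  by rewrite rmorph_nat meval0 => /eqP; rewrite Num.Theory.pnatr_eq0.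
- move=> n n_gt0; rewrite /varq -tofracXn -tofrac1 tofrac_eq.
  apply/eqP => /(congr1 (meval v)); rewrite rmorphXn /= mevalXU meval1 /v -natrX.
  move=> /eqP; rewrite Num.Theory.pnatr_eq1 => /eqP h2.
  by have := ltn_expl n (isT : (1 < 2)%N); rewrite h2; lia.
Qed.

Theorem mainTheorem8 (m : nat) (hm : (1 <= m)%N) :
  let q := varq m in
  let w := varw m in
  let z := @varz m in
  \sum_(s : 'S_m) \sum_(r < m.+1)
     qbinom q m r
     * (\prod_(k < m | (k < r)%N) (w - q ^+ m.-1 * z (s k)))
     * (\prod_(k < m | (r <= k)%N) (z (s k) - q ^+ m.-1 * w))
     * (\prod_(i < m) \prod_(j < m | (i < j)%N)
          ((z (s i) - q ^+ 2 * z (s j)) / (z (s i) - z (s j))))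
  = 0.
Proof.
move=> q w z.
have [q0 h2 qn1] := varq_facts m.
have qint_q := qint_neq0 q0 qn1.
rewrite exchange_big /=.
transitivity (\sum_(r < m.+1) qbinom q m r *
    symz (q ^+ 2) z (fun y => \prod_(k < m) (lin_const q w m r k + lin_slope q m r k * y k))).
  apply: eq_bigr => r _; rewrite /symz mulr_sumr; apply: eq_bigr => s _.
  by rewrite -prod_lin_split !mulrA.
under eq_bigr do rewrite symz_prod_linear ?expf_neq0 //.
rewrite symz_coef_sum sum_qbinom_factor_poly //.
by rewrite /symz_coef big1 // => j _; rewrite coef0 mul0r.
Qed.
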